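(* Let $(\lambda_n)_{n\ge1}$ be real numbers with $\lambda_n\in(0,1)$ for all $n$, such that $\sum_{n=1}^\infty\lambda_n=\infty$ and $$\sum_{j=1}^n\frac{\prod_{k=1}^n(1-\lambda_k)}{1-\lambda_j}\to0\quad\text{as }n\to\infty.$$ Let $(a_n)_{n\ge1}$ be a nonnegative sequence satisfying $a_n\le(1-\lambda_n)a_{n-1}+\prod_{k=1}^n(1-\lambda_k)$ for all $n\ge2$. Then $\lim_{n\to\infty}a_n=0$. *)

(* concrete reals R. Sequences are functions nat -> R;
   only indices n >= 1 are meaningful (values at 0 are ignored). *)
From Stdlib Require Import Reals.
Open Scope R_scope.

Fixpoint sum1 (f : nat -> R) (n : nat) : R :=
  match n with
  | O => 0
  | S m => sum1 f m + f (S m)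
  end.

Fixpoint prod1 (f : nat -> R) (n : nat) : R :=
  match n with
  | O => 1
  | S m => prod1 f m * f (S m)
  end.

(* Writing P n for the product of the (1 - lam k) up to n, the recursion gives by induction
   a n <= P n * (a 1 / P 1 + (n - 1)), so a n = O(n P n).  Each of the n terms
   P n / (1 - lam j) of the vanishing sum is at least P n, hence n P n tends to 0 and so
   does a n. *)
From Stdlib Require Import Reals Lra Lia.
Open Scope R_scope.

Lemma prod1_pos (f : nat -> R) (n : nat) :
  (forall k, (1 <= k <= n)%nat -> 0 < f k) -> 0 < prod1 f n.
Proof.
  induction n as [|n IH]; intros Hf; simpl; [lra|].
  apply Rmult_lt_0_compat; [apply IH; intros; apply Hf; lia | apply Hf; lia].
Qed.

Lemma sum1_ge_const (f : nat -> R) (x : R) (n : nat) :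
  (forall j, (1 <= j <= n)%nat -> x <= f j) -> INR n * x <= sum1 f n.
Proof.
  induction n as [|n IH]; intros Hf; simpl sum1; [simpl INR; lra|].
  rewrite S_INR.
  assert (IHn : INR n * x <= sum1 f n) by (apply IH; intros; apply Hf; lia).
  assert (Hlast : x <= f (S n)) by (apply Hf; lia).
  lra.
Qed.

Lemma prod1_linear_recurrence_bound (q a : nat -> R) :
  prod1 q 1 <> 0 ->
  (forall n, (2 <= n)%nat -> 0 <= q n) ->
  (forall n, (2 <= n)%nat -> a n <= q n * a (n - 1)%nat + prod1 q n) ->
  forall n, (1 <= n)%nat ->
    a n <= prod1 q n * (a 1%nat / prod1 q 1 + INR n - 1).
Proof.
  intros HP1 Hq Hrec n Hn.
  induction n as [|n IH]; [lia|].
  destruct n as [|n].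
  - simpl INR. right. field. exact HP1.
  - specialize (IH ltac:(lia)).
    specialize (Hrec (S (S n)) ltac:(lia)).
    specialize (Hq (S (S n)) ltac:(lia)).
    replace (S (S n) - 1)%nat with (S n) in * by lia.
    change (prod1 q (S (S n))) with (prod1 q (S n) * q (S (S n))) in *.
    rewrite (S_INR (S n)).
    assert (q (S (S n)) * a (S n)
            <= q (S (S n)) * (prod1 q (S n) * (a 1%nat / prod1 q 1 + INR (S n) - 1)))
      by (apply Rmult_le_compat_l; assumption).
    lra.
Qed.

Lemma affine_le_scaled_mul (p c x : R) :
  0 <= p -> 0 <= c -> 1 <= x -> p * (c + x - 1) <= (c + 1) * (x * p).
Proof.
  intros Hp Hc Hx.
  assert (0 <= p * (c * (x - 1) + 1)).
  { apply Rmult_le_pos; [exact Hp|].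
    assert (0 <= c * (x - 1)) by (apply Rmult_le_pos; lra). lra. }
  nra.
Qed.

Lemma Un_cv_0_squeeze (u v : nat -> R) (K : R) (N0 : nat) :
  0 < K ->
  (forall n, (N0 <= n)%nat -> 0 <= u n <= K * v n) ->
  Un_cv v 0 -> Un_cv u 0.
Proof.
  intros HK Huv Hv eps Heps.
  destruct (Hv (eps / K)) as [N HN]; [apply Rdiv_lt_0_compat; assumption|].
  exists (max N N0). intros n Hn.
  specialize (HN n ltac:(lia)). specialize (Huv n ltac:(lia)).
  unfold R_dist in *. rewrite Rminus_0_r in *.
  assert (Hvn : v n < eps / K) by (apply Rabs_def2 in HN; lra).
  assert (K * v n < K * (eps / K)) by (apply Rmult_lt_compat_l; assumption).
  replace (K * (eps / K)) with eps in * by (field; lra).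
  rewrite Rabs_right; lra.
Qed.

Section ContractionFactors.

Variable lam : nat -> R.
Hypothesis hlam : forall n : nat, (1 <= n)%nat -> 0 < lam n < 1.

Let P (n : nat) : R := prod1 (fun k => 1 - lam k) n.

Lemma prod1_one_sub_pos (n : nat) : 0 < P n.
Proof. apply prod1_pos. intros k Hk. assert (Hk' := hlam k ltac:(lia)). lra. Qed.

Lemma INR_mul_prod1_le_sum (n : nat) :
  INR n * P n <= sum1 (fun j => P n / (1 - lam j)) n.
Proof.
  apply sum1_ge_const. intros j Hj.
  assert (Hj' := hlam j ltac:(lia)).
  assert (HPn := prod1_one_sub_pos n).
  unfold Rdiv. rewrite <- (Rmult_1_r (P n)) at 1.
  apply Rmult_le_compat_l; [lra|].
  rewrite <- Rinv_1. apply Rinv_le_contravar; lra.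
Qed.

End ContractionFactors.

Theorem lemma3p1 (lam a : nat -> R)
  (hlam : forall n : nat, (1 <= n)%nat -> 0 < lam n < 1)
  (hdiv : cv_infty (fun n => sum1 lam n))
  (hsum : Un_cv (fun n => sum1 (fun j => prod1 (fun k => 1 - lam k) n / (1 - lam j)) n) 0)
  (ha_nonneg : forall n : nat, (1 <= n)%nat -> 0 <= a n)
  (hrec : forall n : nat, (2 <= n)%nat ->
     a n <= (1 - lam n) * a (n - 1)%nat + prod1 (fun k => 1 - lam k) n) :
  Un_cv a 0.
Proof.
  set (P := prod1 (fun k => 1 - lam k)).
  assert (HP : forall n, 0 < P n) by exact (prod1_one_sub_pos lam hlam).
  set (c := a 1%nat / P 1%nat).
  assert (Hc : 0 <= c).
  { apply Rmult_le_pos; [apply ha_nonneg; lia | apply Rlt_le, Rinv_0_lt_compat, HP]. }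
  assert (Hfactor : forall n, (2 <= n)%nat -> 0 <= 1 - lam n).
  { intros n Hn. assert (Hn' := hlam n ltac:(lia)). lra. }
  assert (Hbound := prod1_linear_recurrence_bound _ a
                      (Rgt_not_eq _ _ (HP 1%nat)) Hfactor hrec).
  refine (Un_cv_0_squeeze _ _ (c + 1) 1 _ _ hsum); [lra|].
  intros n Hn. split; [apply ha_nonneg; exact Hn|].
  assert (HnP := INR_mul_prod1_le_sum lam hlam n).
  assert (Han := Hbound n Hn). fold P c in Han, HnP |- *.
  apply (Rle_trans _ _ _ Han), (Rle_trans _ ((c + 1) * (INR n * P n))).
  - apply affine_le_scaled_mul; [apply Rlt_le, HP | exact Hc | apply (le_INR 1), Hn].
  - apply Rmult_le_compat_l; [lra | exact HnP].
Qed.
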